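(* Let $n\in\mathbb{N}_0$ and $\alpha>0$. For $u,v$ in the open unit disk $\mathbb{D}=\{u\in\mathbb{C}:|u|<1\}$ with $u\neq v$ define $$H_n^\alpha(u,v)=\frac{|u|^{2n}\,|1-\overline{u}v|^{2(n+\alpha+1)}}{|u-v|^{2n}\,(1-|v|^2)^{\alpha+1}}.$$ Let $0<R<1$, let $v\in(0,1)$ be a positive real number with $v<R$, and let $u=|u|e^{-i\varphi}$ with $\varphi\in\mathbb{R}$ and $R\le |u|<1$. If $|\varphi|\le 1-vR$, then $$H_n^\alpha(u,v)\le 2^{n+\alpha+1}\frac{(1-vR)^{2n+\alpha+1}}{(1-v/R)^{2n}}.$$
   Context: Here $\mathbb{N}_0=\{0,1,2,\dots\}$; for $n=0$ the factors with exponent $2n$ are equal to $1$. *)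

From Stdlib Require Import Reals.
From Coquelicot Require Import Coquelicot.
Open Scope R_scope.

(* Real exponents are taken via Rpower (bases are positive on the domain). *)
Definition H (n : nat) (alpha : R) (u v : C) : R :=
  (Cmod u ^ (2 * n) * Rpower (Cmod (Cminus 1 (Cmult (Cconj u) v))) (2 * (INR n + alpha + 1)))
  / (Cmod (Cminus u v) ^ (2 * n) * Rpower (1 - Cmod v ^ 2) (alpha + 1)).

Definition cexpi (t : R) : C := (cos t, sin t).

(* Write u = r e^{-i phi}.  Then |1 - conj(u) v|^2 = (1 - r v)^2 + 2 r v (1 - cos phi),
   and 1 - cos phi <= phi^2 / 2 together with R <= r < 1 and |phi| <= 1 - v R bounds it
   by 2 (1 - v R)^2.  The reverse triangle inequality gives |u - v| >= r - v >= r (1 - v/R),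
   which cancels the factor |u|^(2n), and 1 - v^2 >= 1 - v R absorbs one power
   (1 - v R)^(alpha+1) of the numerator. *)

From Stdlib Require Import Reals Lra.
From Coquelicot Require Import Coquelicot.
Open Scope R_scope.

Lemma Rabs_sin_le (x : R) : Rabs (sin x) <= Rabs x.
Proof.
  assert (Hpos : forall t, 0 <= t -> Rabs (sin t) <= t).
  { intros t Ht.
    destruct (Req_dec t 0) as [-> | Ht0]; [rewrite sin_0, Rabs_R0; lra |].
    pose proof (sin_lt_x t ltac:(lra)).
    pose proof PI2_1.
    destruct (Rle_dec t PI) as [HtPI | HtPI].
    - rewrite Rabs_pos_eq by (apply sin_ge_0; lra). lra.
    - pose proof (SIN_bound t). apply Rabs_le. split; lra. }
  destruct (Rle_dec 0 x) as [Hx | Hx].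
  - rewrite (Rabs_pos_eq x Hx). now apply Hpos.
  - rewrite (Rabs_left x), <- Rabs_Ropp, <- sin_neg by lra. apply Hpos. lra.
Qed.

Lemma one_minus_cos_le (t : R) : 1 - cos t <= t ^ 2 / 2.
Proof.
  replace t with (2 * (t / 2)) at 1 by field.
  rewrite cos_2a_sin.
  pose proof (Rabs_sin_le (t / 2)) as Hs.
  assert (sin (t / 2) ^ 2 <= (t / 2) ^ 2).
  { rewrite <- (pow2_abs (sin _)), <- (pow2_abs (t / 2)).
    apply pow_incr. split; [apply Rabs_pos | exact Hs]. }
  lra.
Qed.

Lemma Cmod_minus_ge (z w : C) : Cmod z - Cmod w <= Cmod (Cminus z w).
Proof.
  pose proof (Cmod_triangle (Cminus z w) w) as Htri.
  replace (Cplus (Cminus z w) w) with z in Htri by (unfold Cminus; ring).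
  lra.
Qed.

Lemma Cmod_1_minus_polar_sqr (r v phi : R) :
  Cmod (Cminus 1 (Cmult (Cconj (Cmult (RtoC r) (cexpi (- phi)))) (RtoC v))) ^ 2
  = (1 - r * v) ^ 2 + 2 * (r * v) * (1 - cos phi).
Proof.
  unfold Cmod. rewrite pow2_sqrt by (apply Rplus_le_le_0_compat; apply pow2_ge_0).
  unfold Cminus, Cmult, Cconj, cexpi, RtoC, Cplus, Copp; simpl.
  rewrite cos_neg, sin_neg.
  pose proof (sin2_cos2 phi) as Hpyth. unfold Rsqr in Hpyth. nra.
Qed.

Lemma Cmod_1_minus_polar_pos (r v phi : R) : 0 <= r * v < 1 ->
  0 < Cmod (Cminus 1 (Cmult (Cconj (Cmult (RtoC r) (cexpi (- phi)))) (RtoC v))).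
Proof.
  intros Hrv.
  pose proof (Cmod_1_minus_polar_sqr r v phi) as Hsqr.
  pose proof (Cmod_ge_0 (Cminus 1 (Cmult (Cconj (Cmult (RtoC r) (cexpi (- phi)))) (RtoC v)))).
  pose proof (COS_bound phi).
  assert (0 < (1 - r * v) ^ 2) by (apply pow_lt; lra).
  assert (0 <= r * v * (1 - cos phi)) by (apply Rmult_le_pos; lra).
  nra.
Qed.

(* [x] plays the role of [r v] and [c] that of [1 - v R]. *)
Lemma sqr_dist_one_polar_le (x c phi : R) :
  0 <= x <= 1 -> 1 - c <= x -> Rabs phi <= c ->
  (1 - x) ^ 2 + 2 * x * (1 - cos phi) <= 2 * c ^ 2.
Proof.
  intros Hx Hxc Hphi.
  pose proof (one_minus_cos_le phi) as Hcos.
  pose proof (COS_bound phi).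
  assert (Hphi2 : phi ^ 2 <= c ^ 2).
  { rewrite <- (pow2_abs phi). apply pow_incr. split; [apply Rabs_pos | exact Hphi]. }
  assert (x * (1 - cos phi) <= x * (phi ^ 2 / 2)) by (apply Rmult_le_compat_l; lra).
  assert (x * phi ^ 2 <= phi ^ 2) by (pose proof (pow2_ge_0 phi); nra).
  assert ((1 - x) ^ 2 <= c ^ 2) by (apply pow_incr; lra).
  lra.
Qed.

Lemma Rpower_double_nat_plus (a s : R) (n : nat) : 0 < a ->
  Rpower a (2 * (INR n + s)) = (a ^ 2) ^ n * Rpower (a ^ 2) s.
Proof.
  intros Ha.
  rewrite <- (Rpower_pow n (a ^ 2)), <- Rpower_plus, <- (Rpower_pow 2 a), Rpower_mult
    by (try apply pow_lt; lra).
  now replace (INR 2) with 2 by (simpl; ring).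
Qed.

Lemma Rpower_two_nat_plus (c s : R) (n : nat) : 0 < c ->
  Rpower 2 (INR n + s) * Rpower c (2 * INR n + s)
  = (2 * c ^ 2) ^ n * Rpower (2 * c) s.
Proof.
  intros Hc.
  replace (2 * INR n + s) with (INR (2 * n) + s) by (rewrite mult_INR; simpl; ring).
  rewrite !Rpower_plus, !Rpower_pow, <- Rpower_mult_distr by lra.
  rewrite Rpow_mult_distr, pow_mult. ring.
Qed.

(* The shape of [H]: [r], [A], [B], [q] stand for [|u|], [|1 - conj(u) v|], [|u - v|],
   [1 - |v|^2], and [s] for [alpha + 1]. *)
Lemma H_shape_le (n : nat) (s r A B q c D : R) :
  0 <= s -> 0 < r -> 0 < A -> 0 < c -> 0 < D ->
  r * D <= B -> A ^ 2 <= 2 * c ^ 2 -> c <= q ->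
  r ^ (2 * n) * Rpower A (2 * (INR n + s)) / (B ^ (2 * n) * Rpower q s)
  <= Rpower 2 (INR n + s) * Rpower c (2 * INR n + s) / D ^ (2 * n).
Proof.
  intros Hs Hr HA Hc HD HB HA2 Hcq.
  assert (HrD : 0 < r * D) by (apply Rmult_lt_0_compat; lra).
  rewrite Rpower_double_nat_plus, Rpower_two_nat_plus by lra.
  assert (Hpow_B : (r * D) ^ (2 * n) <= B ^ (2 * n)) by (apply pow_incr; lra).
  assert (Hpow_A : (A ^ 2) ^ n <= (2 * c ^ 2) ^ n) by (apply pow_incr; nra).
  assert (Hpower_A : Rpower (A ^ 2) s <= Rpower (2 * c) s * Rpower q s).
  { rewrite Rpower_mult_distr by lra.
    apply Rle_Rpower_l; [exact Hs |]. split; nra. }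
  assert (0 < Rpower q s) by apply exp_pos.
  assert (0 < Rpower (A ^ 2) s) by apply exp_pos.
  assert (0 < (A ^ 2) ^ n) by (apply pow_lt; nra).
  assert (0 < (r * D) ^ (2 * n)) by (apply pow_lt; lra).
  assert (0 < B ^ (2 * n)) by (apply pow_lt; lra).
  set (W := D ^ (2 * n)).
  set (Y := B ^ (2 * n) * Rpower q s).
  assert (HW : 0 < W) by (apply pow_lt; lra).
  assert (HY : 0 < Y) by (apply Rmult_lt_0_compat; lra).
  assert (Hcross : r ^ (2 * n) * ((A ^ 2) ^ n * Rpower (A ^ 2) s) * W
                   <= (2 * c ^ 2) ^ n * Rpower (2 * c) s * Y).
  { unfold W, Y.
    replace (r ^ (2 * n) * ((A ^ 2) ^ n * Rpower (A ^ 2) s) * D ^ (2 * n))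
      with ((r * D) ^ (2 * n) * ((A ^ 2) ^ n * Rpower (A ^ 2) s))
      by (rewrite Rpow_mult_distr; ring).
    replace ((2 * c ^ 2) ^ n * Rpower (2 * c) s * (B ^ (2 * n) * Rpower q s))
      with (B ^ (2 * n) * ((2 * c ^ 2) ^ n * (Rpower (2 * c) s * Rpower q s))) by ring.
    apply Rmult_le_compat; [lra | apply Rmult_le_pos; lra | lra |].
    apply Rmult_le_compat; lra. }
  unfold Rdiv.
  replace (r ^ (2 * n) * ((A ^ 2) ^ n * Rpower (A ^ 2) s) * / Y)
    with (r ^ (2 * n) * ((A ^ 2) ^ n * Rpower (A ^ 2) s) * W * / (Y * W))
    by (field; split; lra).
  replace ((2 * c ^ 2) ^ n * Rpower (2 * c) s * / W)
    with ((2 * c ^ 2) ^ n * Rpower (2 * c) s * Y * / (Y * W))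
    by (field; split; lra).
  apply Rmult_le_compat_r; [left; apply Rinv_0_lt_compat, Rmult_lt_0_compat |]; lra.
Qed.

Theorem lemma1 (n : nat) (alpha : R) (Rr : R) (v : R) (u : C) (phi : R) :
  0 < alpha ->
  0 < Rr -> Rr < 1 ->
  0 < v -> v < Rr ->
  u = Cmult (RtoC (Cmod u)) (cexpi (- phi)) ->
  Rr <= Cmod u -> Cmod u < 1 ->
  Rabs phi <= 1 - v * Rr ->
  H n alpha u (RtoC v) <=
    Rpower 2 (INR n + alpha + 1) * Rpower (1 - v * Rr) (2 * INR n + alpha + 1)
    / (1 - v / Rr) ^ (2 * n).
Proof.
  intros Ha HR0 HR1 Hv0 HvR Hu Hru Hr1 Hphi.
  pose proof (Cmod_1_minus_polar_sqr (Cmod u) v phi) as EA. rewrite <- Hu in EA.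
  assert (Hrv : Rr * v <= Cmod u * v < 1) by (split; nra).
  pose proof (sqr_dist_one_polar_le (Cmod u * v) (1 - v * Rr) phi
                ltac:(nra) ltac:(lra) Hphi) as HA2.
  assert (HvRr : v <= Cmod u * (v / Rr)).
  { assert (Hv : v = Rr * (v / Rr)) by (field; lra).
    assert (0 < v / Rr) by (apply Rdiv_lt_0_compat; lra).
    nra. }
  pose proof (Cmod_minus_ge u (RtoC v)) as HB.
  rewrite Cmod_R, Rabs_pos_eq in HB by lra.
  pose proof (Cmod_1_minus_polar_pos (Cmod u) v phi ltac:(nra)) as HA.
  rewrite <- Hu in HA.
  assert (HD : 0 < 1 - v / Rr).
  { apply Rlt_0_minus, Rlt_div_l; lra. }
  assert (Hq : 1 - v * Rr <= 1 - v ^ 2) by nra.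
  unfold H. rewrite Cmod_R, Rabs_pos_eq by lra.
  replace (INR n + alpha + 1) with (INR n + (alpha + 1)) by ring.
  replace (2 * INR n + alpha + 1) with (2 * INR n + (alpha + 1)) by ring.
  apply H_shape_le; lra.
Qed.
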